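(* Let ${\bold k}$ be an algebraically closed field of characteristic $p\ge3$. Then $(R_p\otimes{\bf Lie}_p)_{S_p}\cong{\bold k}$, i.e. the space of $S_p$-coinvariants of $R_p\otimes{\bf Lie}_p$ is one-dimensional.
   Context: ${\bf Lie}_p$ is the $S_p$-representation over ${\bold k}$ given by the arity-$p$ component of the Lie operad (the span of multilinear Lie monomials in $x_1,\dots,x_p$ in the free Lie algebra over ${\bold k}$). $R_p$ is the $(p-2)$-dimensional irreducible ${\bold k}S_p$-module of functions on $\{1,\dots,p\}$ with zero sum of values, modulo constant functions. *)

From HB Require Import structures.
From mathcomp Require Import all_boot all_order all_algebra all_fingroup.
Set Implicit Arguments.
Unset Strict Implicit.
Unset Printing Implicit Defensive.
Import GRing.Theory.
Local Open Scope ring_scope.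

(* Concrete model of the S_p-modules involved, over a field k.
   - k^{1..p} is modelled by F := {ffun 'I_p -> k^o}.
   - Multilinear part of the free associative algebra on x_0..x_{p-1}:
     words x_{s 0} x_{s 1} ... x_{s (p-1)} indexed by s : {perm 'I_p};
     modelled by A := {ffun {perm 'I_p} -> k^o}.
   - Lie_p = subspace of A spanned by the (expanded) multilinear Lie monomials
     [..[[x_{t 0}, x_{t 1}], x_{t 2}], ..., x_{t (p-1)}] (left-normed brackets).
   - S_p acts on the index set by g : i |-> g i, on words by x_i |-> x_{g i}. *)

Section LieModel.
Variables (k : fieldType) (p : nat).

Definition word (s : {perm 'I_p}) : seq 'I_p := [seq s i | i <- enum 'I_p].

Definition lcomb := seq (k * seq 'I_p).

(* right-bracketing with a new letter b: u |-> u x_b - x_b u *)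
Definition bracket_letter (u : lcomb) (b : 'I_p) : lcomb :=
  [seq (c.1, rcons c.2 b) | c <- u] ++ [seq (- c.1, b :: c.2) | c <- u].

Definition lnbracket (s : seq 'I_p) : lcomb :=
  match s with
  | [::] => [::]
  | a :: s' => foldl bracket_letter [:: (1, [:: a])] s'
  end.

Definition multilin (u : lcomb) : {ffun {perm 'I_p} -> k^o} :=
  [ffun s => \sum_(c <- u | c.2 == word s) c.1].

Definition lie_monomial (t : {perm 'I_p}) : {ffun {perm 'I_p} -> k^o} :=
  multilin (lnbracket (word t)).

Definition Lie : {vspace {ffun {perm 'I_p} -> k^o}} :=
  <<[seq lie_monomial t | t <- enum {perm 'I_p}]>>%VS.

Definition delta (i : 'I_p) : {ffun 'I_p -> k^o} := [ffun j => (i == j)%:R].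

(* zero-sum functions on {1..p} (spanned by the e_i - e_j) *)
Definition zerosum : {vspace {ffun 'I_p -> k^o}} :=
  <<[seq delta i - delta j | i <- enum 'I_p, j <- enum 'I_p]>>%VS.

Definition constants : {vspace {ffun 'I_p -> k^o}} :=
  <[ [ffun _ => (1 : k^o)] ]>%VS.

(* tensor product: F (x) A realised as functions on 'I_p * {perm 'I_p} *)
Definition tens (f : {ffun 'I_p -> k^o}) (v : {ffun {perm 'I_p} -> k^o})
  : {ffun ('I_p * {perm 'I_p}) -> k^o} := [ffun x => f x.1 * v x.2].

Definition tensv (U : {vspace {ffun 'I_p -> k^o}})
    (W : {vspace {ffun {perm 'I_p} -> k^o}})
  : {vspace {ffun ('I_p * {perm 'I_p}) -> k^o}} :=
  <<[seq tens f v | f <- vbasis U, v <- vbasis W]>>%VS.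

(* diagonal S_p action on F (x) A:  g.(e_i (x) w_s) = e_{g i} (x) w_{g o s} *)
Definition act (g : {perm 'I_p}) (X : {ffun ('I_p * {perm 'I_p}) -> k^o})
  : {ffun ('I_p * {perm 'I_p}) -> k^o} :=
  [ffun x => X ((g^-1)%g x.1, (x.2 * g^-1)%g)].

(* R_p (x) Lie_p = (Z (x) Lie_p) / (C (x) Lie_p), where Z = zero-sum functions,
   C = constants (C <= Z since char k = p).  Its S_p-coinvariants are
   (Z (x) Lie_p) / (C (x) Lie_p + span{ g.X - X : g in S_p, X in Z (x) Lie_p }). *)
Definition coinv_relations : {vspace {ffun ('I_p * {perm 'I_p}) -> k^o}} :=
  (tensv constants Lie +
   <<[seq act g X - X | g <- enum {perm 'I_p}, X <- vbasis (tensv zerosum Lie)]>>)%VS.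

Definition coinv_dim : nat :=
  (\dim (tensv zerosum Lie) - \dim coinv_relations)%N.

End LieModel.

(* The linear form [X |-> \sum_s X (s e0, s)], i.e. pairing with the S_p-invariant
   vector [\sum_s e_(s e0) (x) x_(s 0) .. x_(s (p-1))], vanishes on every coinvariant
   relation: on [g.X - X] by invariance, and on constants (x) Lie_p because the
   coefficients of a Lie polynomial of degree >= 2 sum to zero.  It takes the value 2
   on [X0 = (e_e0 - e_e1) (x) [..[x_e0, x_e1], ..]], so X0 survives since p <> 2.
   Conversely, acting by S_p brings every generator [(e_i - e_j) (x) lie_monomial t]
   to the standard Lie monomial, and the transposition of the first two letters, which
   negates that monomial, gives [2 (e_e0 - e_y) (x) lie_monomial 1 = X0] modulo
   relations; hence the coinvariants are spanned by X0. *)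

From Pilot Require Import Defs.
From HB Require Import structures.
From mathcomp Require Import all_boot all_order all_algebra all_fingroup.
From mathcomp Require Import ring.
Set Implicit Arguments.
Unset Strict Implicit.
Unset Printing Implicit Defensive.
Import GRing.Theory.
Local Open Scope ring_scope.

Section BracketEval.
Variables (k : fieldType) (p : nat).
Implicit Types (g : seq 'I_p -> k) (s w : seq 'I_p).

Definition lcomb_eval g (u : lcomb k p) : k := \sum_(c <- u) c.1 * g c.2.

(* The value of the functional [g] on the expansion of [[..[w, x_b1], ..], x_bn]]
   for [s = b1 .. bn]. *)
Fixpoint bracket_eval s g w : k :=
  if s is b :: s' then bracket_eval s' g (rcons w b) - bracket_eval s' g (b :: w)
  else g w.

Lemma lcomb_eval_foldl s u g :
  lcomb_eval g (foldl (@bracket_letter k p) u s) =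
  \sum_(c <- u) c.1 * bracket_eval s g c.2.
Proof.
elim: s u => [|b s IHs] u //=.
rewrite IHs /lcomb_eval /bracket_letter big_cat !big_map /= -big_split /=.
by apply: eq_bigr => c _; rewrite mulrBr mulNr.
Qed.

Lemma lcomb_eval_lnbracket a s g :
  lcomb_eval g (lnbracket k (a :: s)) = bracket_eval s g [:: a].
Proof. by rewrite /= lcomb_eval_foldl big_seq1 mul1r. Qed.

Lemma eq_bracket_eval s g g' w :
  (forall w', perm_eq w' (w ++ s) -> g w' = g' w') ->
  bracket_eval s g w = bracket_eval s g' w.
Proof.
elim: s w => [|b s IHs] w gg' /=; first by apply: gg'; rewrite cats0.
congr (_ - _); apply: IHs => w' w'P; apply: gg'; first by rewrite -cat_rcons.
by rewrite (permPl w'P) (perm_catCA [:: b] w s).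
Qed.

Lemma bracket_eval_sum I (r : seq I) (c : I -> k) (G : I -> seq 'I_p -> k) s w :
  bracket_eval s (fun w' => \sum_(i <- r) c i * G i w') w =
  \sum_(i <- r) c i * bracket_eval s (G i) w.
Proof.
elim: s w => [|b s IHs] w //=.
by rewrite !IHs -sumrB; apply: eq_bigr => i _; rewrite mulrBr.
Qed.

Lemma bracket_evalB s g g' w :
  bracket_eval s (fun w' => g w' - g' w') w = bracket_eval s g w - bracket_eval s g' w.
Proof. by elim: s w => [|b s IHs] w //=; rewrite !IHs; ring. Qed.

Lemma bracket_eval_cst s c w : s != [::] -> bracket_eval s (fun=> c) w = 0.
Proof.
elim: s w => [|b s IHs] w //= _.
case: s IHs => [|b' s] IHs; first by rewrite /= subrr.
by rewrite !IHs // subrr.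
Qed.

Lemma bracket_eval_map (h : {perm 'I_p}) s G w :
  bracket_eval (map h s) G (map h w) = bracket_eval s (fun w' => G (map h w')) w.
Proof. by elim: s w => [|b s IHs] w //=; rewrite -map_rcons -!IHs. Qed.

Lemma bracket_eval_head x0 x s w : x \notin s -> w != [::] ->
  bracket_eval s (fun w' => (x == head x0 w')%:R) w = (x == head x0 w)%:R.
Proof.
elim: s w => [|b s IHs] w //=; rewrite inE negb_or => /andP[xb xs] wn.
rewrite !IHs //; last by case: w wn.
by case: w wn => //= y w _; rewrite (negbTE xb) subr0.
Qed.

End BracketEval.

Section Words.
Variable p : nat.
Implicit Types (s g : {perm 'I_p}).

Lemma size_word s : size (word s) = p.
Proof. by rewrite size_map size_enum_ord. Qed.

Lemma nth_word s (i : 'I_p) x0 : nth x0 (word s) i = s i.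
Proof. by rewrite (nth_map i) ?size_enum_ord // nth_ord_enum. Qed.

Lemma word_inj : injective (@word p).
Proof. by move=> s1 s2 E; apply/permP => i; rewrite -(nth_word s1 i i) E nth_word. Qed.

Lemma perm_word_enum s : perm_eq (word s) (enum 'I_p).
Proof.
apply: uniq_perm; rewrite ?(map_inj_uniq (@perm_inj _ s)) ?enum_uniq //.
move=> x; rewrite mem_enum; apply/mapP; exists (s^-1 x)%g; rewrite ?mem_enum //.
by rewrite permKV.
Qed.

Lemma perm_enum_word w : perm_eq w (enum 'I_p) -> exists s, word s = w.
Proof.
move=> wP; have w_size : size w = p by rewrite (perm_size wP) size_enum_ord.
have w_uniq : uniq w by rewrite (perm_uniq wP) enum_uniq.
pose f (i : 'I_p) := nth i w i.
have f_inj : injective f.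
  move=> i j; rewrite /f => fij; apply/val_inj/eqP => /=.
  rewrite -(nth_uniq i _ _ w_uniq) ?w_size ?ltn_ord //.
  by rewrite [X in _ == X](set_nth_default j) ?w_size // -fij.
exists (perm f_inj); case: w wP w_size w_uniq @f f_inj => [|x0 w] _ w_size _ f f_inj.
  by apply: size0nil; rewrite size_word.
apply: (@eq_from_nth _ x0); rewrite size_word ?w_size // => i ltip.
by rewrite (nth_word _ (Ordinal ltip)) permE /f /= (set_nth_default x0) ?w_size.
Qed.

Lemma wordM s g : word (s * g)%g = map g (word s).
Proof. by rewrite /word -map_comp; apply: eq_map => i /=; rewrite permM. Qed.

Lemma enum_ord_cons2 : (2 <= p)%N -> exists e0 e1 rest, enum 'I_p = [:: e0, e1 & rest].
Proof.
move=> le2p; case E: (enum 'I_p) => [|e0 [|e1 rest]]; last by exists e0, e1, rest.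
all: by exfalso; move: le2p; rewrite -(size_enum_ord p) E.
Qed.

End Words.

Section LieMonomial.
Variables (k : fieldType) (p : nat).
Implicit Types (s t g : {perm 'I_p}).

Definition word_indicator s (w : seq 'I_p) : k := (w == word s)%:R.

Lemma multilinE (u : lcomb k p) s : multilin u s = lcomb_eval (word_indicator s) u.
Proof.
rewrite ffunE /lcomb_eval big_mkcond; apply: eq_bigr => c _.
by rewrite /word_indicator; case: eqP; rewrite ?mulr1 ?mulr0.
Qed.

Lemma lie_monomialE t a w s : word t = a :: w ->
  lie_monomial k t s = bracket_eval w (word_indicator s) [:: a].
Proof. by move=> Et; rewrite /lie_monomial multilinE Et lcomb_eval_lnbracket. Qed.

Lemma sum_word_indicator (F : {perm 'I_p} -> k) s0 :
  \sum_s F s * word_indicator s (word s0) = F s0.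
Proof.
rewrite (bigD1 s0) //= /word_indicator eqxx mulr1 big1 ?addr0 // => s ns.
by rewrite (inj_eq (@word_inj p)) eq_sym (negbTE ns) mulr0.
Qed.

Lemma lie_monomialM t g s : lie_monomial k (t * g)%g s = lie_monomial k t (s * g^-1)%g.
Proof.
case Et: (word t) => [|a w].
  by rewrite /lie_monomial wordM Et /multilin !ffunE !big_nil.
rewrite (lie_monomialE _ Et) (@lie_monomialE _ (g a) (map g w)); last by rewrite wordM Et.
rewrite -[[:: g a]]/(map g [:: a]) bracket_eval_map; apply: eq_bracket_eval => w' _.
rewrite /word_indicator.
have -> : word s = map g (word (s * g^-1)%g) by rewrite -wordM mulgKV.
by rewrite (inj_eq (inj_map (@perm_inj _ g))).
Qed.

Lemma sum_lie_monomial_weighted (G : {perm 'I_p} -> k) (Gw : seq 'I_p -> k) t a w :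
  word t = a :: w -> (forall s, Gw (word s) = G s) ->
  \sum_s G s * lie_monomial k t s = bracket_eval w Gw [:: a].
Proof.
move=> Et GwE; under eq_bigr => s _ do rewrite (lie_monomialE s Et).
rewrite -bracket_eval_sum; apply: eq_bracket_eval => w' w'P.
have [s0 <-] : exists s0, word s0 = w'.
  by apply: perm_enum_word; rewrite (permPl w'P) /= -Et perm_word_enum.
by rewrite sum_word_indicator GwE.
Qed.

Lemma sum_lie_monomial t : (2 <= p)%N -> \sum_s lie_monomial k t s = 0.
Proof.
move=> le2p; have := size_word t.
case Et: (word t) => [|a [|b w]] /= tsize; try by rewrite -tsize in le2p.
under eq_bigr => s _ do rewrite -[lie_monomial _ _ _]mul1r.
by rewrite (@sum_lie_monomial_weighted _ (fun=> 1) _ _ _ Et) // bracket_eval_cst.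
Qed.

Lemma sum_head_lie_monomial (F : 'I_p -> k) t e0 r a w :
  enum 'I_p = e0 :: r -> word t = a :: w ->
  \sum_(s : {perm 'I_p}) F (s e0) * lie_monomial k t s =
  bracket_eval w (fun w' => F (head a w')) [:: a].
Proof. by move=> Ee Et; apply: sum_lie_monomial_weighted => // s; rewrite /word Ee. Qed.

End LieMonomial.

Lemma span_ind (K : fieldType) (vT : vectType K) (X : seq vT) (P : vT -> Prop) :
  P 0 -> (forall a u v, P u -> P v -> P (a *: u + v)) ->
  {in X, forall x, P x} -> forall v, v \in <<X>>%VS -> P v.
Proof.
move=> P0 PD PX v; rewrite -[X]/(tval (in_tuple X)) => /coord_span ->.
apply: big_ind => // [u w Pu Pw|i _]; first by rewrite -[u]scale1r; apply: PD.
by rewrite -[_ *: _]addr0; apply: PD => //; apply/PX/mem_nth.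
Qed.

Lemma dimv_add_line (K : fieldType) (vT : vectType K) (U : {vspace vT}) v :
  v \notin U -> \dim (U + <[v]>) = (\dim U).+1.
Proof.
move=> vU; have v_neq0 : v != 0 by apply: contraNneq vU => ->; rewrite mem0v.
rewrite dimv_disjoint_sum ?dim_vline ?v_neq0 ?addn1 //; apply/eqP; rewrite -subv0.
apply/subvP => x; rewrite memv_cap memv0 => /andP[xU /vlineP[a xE]].
rewrite xE scaler_eq0 (negbTE v_neq0) orbF; apply: contraNT vU => a_neq0.
by rewrite -(scalerK a_neq0 v) -xE memvZ.
Qed.

Section TensorModel.
Variables (k : fieldType) (p : nat).
Implicit Types (s t g : {perm 'I_p}).
Local Notation F := {ffun 'I_p -> k^o}.
Local Notation A := {ffun {perm 'I_p} -> k^o}.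
Local Notation W := {ffun ('I_p * {perm 'I_p}) -> k^o}.

Definition actF g (f : F) : F := [ffun j => f ((g^-1)%g j)].
Definition actA g (v : A) : A := [ffun s => v (s * g^-1)%g].

Lemma actF_is_linear g : linear (actF g).
Proof. by move=> a f f'; apply/ffunP => x; rewrite !ffunE. Qed.
HB.instance Definition _ g := GRing.isLinear.Build k F F *:%R (actF g) (actF_is_linear g).

Lemma actA_is_linear g : linear (actA g).
Proof. by move=> a v v'; apply/ffunP => x; rewrite !ffunE. Qed.
HB.instance Definition _ g := GRing.isLinear.Build k A A *:%R (actA g) (actA_is_linear g).

Lemma act_is_linear g : linear (@Defs.act k p g).
Proof. by move=> a X Y; apply/ffunP => x; rewrite !ffunE. Qed.
HB.instance Definition _ g :=
  GRing.isLinear.Build k W W *:%R (@Defs.act k p g) (act_is_linear g).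

Lemma tens_is_linear (f : F) : linear (tens f).
Proof. by move=> a v v'; apply/ffunP => x; rewrite !ffunE mulrDr -scalerAr. Qed.
HB.instance Definition _ f := GRing.isLinear.Build k A W *:%R (tens f) (tens_is_linear f).

Lemma tens_linl a (f f' : F) (v : A) : tens (a *: f + f') v = a *: tens f v + tens f' v.
Proof. by apply/ffunP => x; rewrite !ffunE mulrDl -scalerAl. Qed.

Lemma tens0l (v : A) : tens 0 v = 0.
Proof. by apply/ffunP => x; rewrite !ffunE mul0r. Qed.

Lemma tensBl (f f' : F) (v : A) : tens (f - f') v = tens f v - tens f' v.
Proof. by apply/ffunP => x; rewrite !ffunE mulrBl. Qed.

Lemma act_tens g f v : Defs.act g (tens f v) = tens (actF g f) (actA g v).
Proof. by apply/ffunP => x; rewrite !ffunE. Qed.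

Lemma actF_delta g i : actF g (delta k i) = delta k (g i).
Proof.
apply/ffunP => j; rewrite !ffunE; congr (_%:R).
by rewrite -{1}(permK g i) (inj_eq (@perm_inj _ _)).
Qed.

Lemma actA_lie_monomial g t : actA g (lie_monomial k t) = lie_monomial k (t * g)%g.
Proof. by apply/ffunP => s; rewrite ffunE lie_monomialM. Qed.

Lemma memv_tens (U : {vspace F}) (V : {vspace A}) f v :
  f \in U -> v \in V -> tens f v \in tensv U V.
Proof.
rewrite -{1}(span_basis (vbasisP U)) -{1}(span_basis (vbasisP V)) => fU vV.
move: f fU; apply: span_ind => [|a f f' ? ?|f fU]; first by rewrite tens0l mem0v.
  by rewrite tens_linl memvD // memvZ.
move: v vV; apply: span_ind => [|a v v' ? ?|v vV]; first by rewrite linear0 mem0v.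
  by rewrite linearP memvD // memvZ.
by apply/memv_span/allpairs_f.
Qed.

Definition orbit_form (e0 : 'I_p) (X : W) : k^o := \sum_(s : {perm 'I_p}) X (s e0, s).

Lemma orbit_form_is_linear e0 : linear (orbit_form e0).
Proof.
move=> a X Y; rewrite /orbit_form scaler_sumr -big_split.
by apply: eq_bigr => s _; rewrite !ffunE.
Qed.
HB.instance Definition _ e0 :=
  GRing.isLinear.Build k W k^o *:%R (orbit_form e0) (orbit_form_is_linear e0).

Lemma orbit_form_act e0 g X : orbit_form e0 (Defs.act g X) = orbit_form e0 X.
Proof.
rewrite /orbit_form (reindex_inj (mulIg g)).
by apply: eq_bigr => s _; rewrite ffunE /= permM permK mulgK.
Qed.

Lemma orbit_form_tens e0 f v :
  orbit_form e0 (tens f v) = \sum_(s : {perm 'I_p}) f (s e0) * v s.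
Proof. by apply: eq_bigr => s _; rewrite ffunE. Qed.

End TensorModel.

Section Coinvariants.
Variables (k : fieldType) (p : nat).
Implicit Types (g t : {perm 'I_p}).
Local Notation W := {ffun ('I_p * {perm 'I_p}) -> k^o}.
Local Notation Z := (zerosum k p).
Local Notation L := (Lie k p).
Local Notation T := (tensv (zerosum k p) (Lie k p)).
Local Notation Rel := (coinv_relations k p).

Lemma memv_delta_zerosum i j : delta k i - delta k j \in Z.
Proof. by apply/memv_span/allpairs_f; rewrite mem_enum. Qed.

Lemma memv_lie_monomial t : lie_monomial k t \in L.
Proof. by apply/memv_span/map_f; rewrite mem_enum. Qed.

Lemma memv_tens_delta_lie i j t : tens (delta k i - delta k j) (lie_monomial k t) \in T.
Proof. by rewrite memv_tens ?memv_delta_zerosum ?memv_lie_monomial. Qed.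

Lemma act_tens_delta_lie g i j t :
  Defs.act g (tens (delta k i - delta k j) (lie_monomial k t)) =
  tens (delta k (g i) - delta k (g j)) (lie_monomial k (t * g)%g).
Proof. by rewrite act_tens raddfB /= !actF_delta actA_lie_monomial. Qed.

Lemma actF_zerosum g f : f \in Z -> actF g f \in Z.
Proof.
move: f; apply: span_ind => [|a f f' ? ?|f]; first by rewrite linear0 mem0v.
  by rewrite linearP memvD // memvZ.
by case/allpairsP=> [[i j] [_ _ ->]] /=; rewrite raddfB /= !actF_delta memv_delta_zerosum.
Qed.

Lemma actA_Lie g v : v \in L -> actA g v \in L.
Proof.
move: v; apply: span_ind => [|a v v' ? ?|v]; first by rewrite linear0 mem0v.
  by rewrite linearP memvD // memvZ.
by case/mapP=> t _ ->; rewrite actA_lie_monomial memv_lie_monomial.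
Qed.

Lemma act_tensv g X : X \in T -> Defs.act g X \in T.
Proof.
move: X; apply: span_ind => [|a X Y ? ?|X]; first by rewrite linear0 mem0v.
  by rewrite linearP memvD // memvZ.
case/allpairsP=> [[f v] [/vbasis_mem fZ /vbasis_mem vL ->]] /=.
by rewrite act_tens memv_tens ?actF_zerosum ?actA_Lie.
Qed.

Lemma act_subr_coinv_relations g X : X \in T -> Defs.act g X - X \in Rel.
Proof.
rewrite -{1}(span_basis (vbasisP T)); move: X; apply: span_ind.
- by rewrite linear0 subr0 mem0v.
- move=> a X Y XR YR; rewrite linearP.
  have -> : a *: Defs.act g X + Defs.act g Y - (a *: X + Y) =
            a *: (Defs.act g X - X) + (Defs.act g Y - Y).
    by rewrite scalerBr opprD addrACA.
  by rewrite memvD // memvZ.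
move=> X XT; apply/(subvP (addvSr _ _))/memv_span.
by apply: allpairs_f; rewrite ?mem_enum.
Qed.

Lemma sum_Lie v : (2 <= p)%N -> v \in L -> \sum_(s : {perm 'I_p}) v s = 0.
Proof.
move=> le2p; move: v; apply: span_ind => [|a v v' sv sv'|v].
- by apply: big1 => s _; rewrite ffunE.
- under eq_bigr => s _ do rewrite !ffunE.
  by rewrite big_split /= -mulr_sumr sv sv' mulr0 addr0.
by case/mapP=> t _ ->; rewrite sum_lie_monomial.
Qed.

Lemma orbit_form_coinv_relations e X : (2 <= p)%N -> X \in Rel -> orbit_form e X = 0.
Proof.
move=> le2p; case/memv_addP=> Y YCL [Y' Y'R ->]; rewrite raddfD /=.
have span_ker (Xs : seq W) :
    {in Xs, forall x, orbit_form e x = 0} -> {in <<Xs>>%VS, forall x, orbit_form e x = 0}.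
  move=> Xs0; apply: span_ind => [|a u v u0 v0|//]; first exact: linear0.
  by rewrite linearP /= u0 v0 scaler0 addr0.
rewrite (span_ker _ _ Y YCL) ?(span_ker _ _ Y' Y'R) ?addr0 // => x.
  by case/allpairsP=> [[g ?] [_ _ ->]] /=; rewrite raddfB /= orbit_form_act subrr.
case/allpairsP=> [[c v] [/vbasis_mem /vlineP[a ->] /vbasis_mem vL ->]] /=.
rewrite orbit_form_tens; under eq_bigr => s _ do rewrite !ffunE.
by rewrite -mulr_sumr sum_Lie ?mulr0.
Qed.

Hypotheses (charp : p \in [pchar k]) (le3p : (3 <= p)%N).
Variables (e0 e1 : 'I_p) (rest : seq 'I_p).
Hypothesis enumE : enum 'I_p = [:: e0, e1 & rest].

Lemma pchar_two_neq0 : 2%:R != 0 :> k.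
Proof.
rewrite -(dvdn_pcharf charp); apply/negP => /(@dvdn_leq _ 2 isT).
by rewrite leqNgt (leq_trans _ le3p).
Qed.

Lemma memv_const_zerosum : [ffun=> 1] \in Z.
Proof.
have -> : [ffun=> 1] = \sum_(i : 'I_p) (delta k i - delta k e0).
  apply/ffunP => j; rewrite sum_ffunE !ffunE; under eq_bigr => i _ do rewrite !ffunE.
  have p0 : p%:R = 0 :> k^o by exact: pcharf0 charp.
  rewrite sumrB sumr_const card_ord -[_ *+ p]mulr_natr p0 mulr0 subr0.
  by rewrite (bigD1 j) //= eqxx big1 ?addr0 // => i /negbTE ->.
by apply: memv_suml => i _; apply: memv_delta_zerosum.
Qed.

Lemma coinv_relations_sub : (Rel <= T)%VS.
Proof.
rewrite subv_add; apply/andP; split; apply/span_subvP => X.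
  case/allpairsP=> [[c v] [/vbasis_mem /vlineP[a ->] /vbasis_mem vL ->]] /=.
  by rewrite memv_tens // memvZ // memv_const_zerosum.
case/allpairsP=> [[g Y] [_ /vbasis_mem YT ->]] /=.
by rewrite memvB // act_tensv.
Qed.

Lemma enum_uniq_split : [&& e0 \notin e1 :: rest, e1 \notin rest & uniq rest].
Proof. by have := enum_uniq 'I_p; rewrite enumE /= andbA. Qed.

Lemma word1 : word (1 : {perm 'I_p})%g = [:: e0, e1 & rest].
Proof. by rewrite /word -enumE map_id_in // => x _; rewrite perm1. Qed.

Definition tau : {perm 'I_p} := tperm e0 e1.

Lemma word_tau : word tau = [:: e1, e0 & rest].
Proof.
have /and3P[e0_rest e1_rest _] := enum_uniq_split.
rewrite /word enumE /= tpermL tpermR map_id_in // => x x_rest.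
have e0x : e0 != x by apply: contraNneq e0_rest => ->; rewrite inE x_rest orbT.
have e1x : e1 != x by apply: contraNneq e1_rest => ->.
by rewrite tpermD.
Qed.

Lemma lie_monomial_tau : lie_monomial k tau = - lie_monomial k 1.
Proof.
apply/ffunP => s; rewrite (lie_monomialE k s word_tau) [RHS]ffunE.
by rewrite (lie_monomialE k s word1) /= opprB.
Qed.

Definition dtens x y : W := tens (delta k x - delta k y) (lie_monomial k 1).

Local Notation X0 := (dtens e0 e1).
Local Notation S := (Rel + <[X0]>)%VS.

Lemma dtens_e0 y : dtens e0 y \in S.
Proof.
have [-> | ne0] := eqVneq y e0; first by rewrite /dtens subrr tens0l mem0v.
have [-> | ne1] := eqVneq y e1; first exact/(subvP (addvSr _ _))/memv_line.
(* [tau] fixes [y] and negates the Lie monomial, so [dtens e0 y + dtens e1 y] is a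
   relation; adding [X0 = dtens e0 y - dtens e1 y] and halving gives [dtens e0 y]. *)
have R : - dtens e1 y - dtens e0 y \in Rel.
  have := act_subr_coinv_relations tau (memv_tens_delta_lie e0 y 1).
  rewrite act_tens_delta_lie mul1g lie_monomial_tau tpermL tpermD 1?eq_sym //.
  by rewrite (raddfN (tens _)).
have X0E : X0 = dtens e0 y - dtens e1 y by rewrite /dtens -tensBl opprB addrA subrK.
have -> : dtens e0 y = 2%:R^-1 *: (X0 - (- dtens e1 y - dtens e0 y)).
  rewrite X0E opprB opprK addrACA addNr addr0 -mulr2n -scaler_nat scalerA.
  by rewrite mulVf ?pchar_two_neq0 // scale1r.
rewrite memvZ // memvB //; first exact/(subvP (addvSr _ _))/memv_line.
exact: (subvP (addvSl _ _)).
Qed.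

Lemma dtens_in x y : dtens x y \in S.
Proof.
have -> : dtens x y = dtens e0 y - dtens e0 x.
  by rewrite /dtens -tensBl; congr tens; rewrite opprB [RHS]addrC addrA subrK.
by rewrite memvB ?dtens_e0.
Qed.

Lemma tensv_sub : (T <= S)%VS.
Proof.
apply/span_subvP => X /allpairsP[[f v] [fZ vL ->]] /=.
move/vbasis_mem: fZ; move/vbasis_mem: vL => /= vL; move: f.
apply: span_ind => [|a f f' ? ?|_ /allpairsP[[i j] [_ _ ->]] /=].
- by rewrite tens0l mem0v.
- by rewrite tens_linl memvD // memvZ.
move: v vL; apply: span_ind => [|a v v' ? ?|_ /mapP[t _ ->]].
- by rewrite linear0 mem0v.
- by rewrite linearP memvD // memvZ.
set G := tens _ _.
have -> : G = Defs.act t^-1 G - (Defs.act t^-1 G - G) by rewrite opprB addrC subrK.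
rewrite memvB //.
  by rewrite act_tens_delta_lie mulgV; apply: dtens_in.
exact/(subvP (addvSl Rel _))/act_subr_coinv_relations/memv_tens_delta_lie.
Qed.

Lemma tensv_eq_coinv_relations_line : T = S.
Proof.
apply/eqP; rewrite eqEsubv tensv_sub subv_add coinv_relations_sub /=.
by apply/subvP => x /vlineP[a ->]; rewrite memvZ // memv_tens_delta_lie.
Qed.

Lemma orbit_form_X0 : orbit_form e0 X0 = 2%:R.
Proof.
have /and3P[e0_notin e1_notin _] := enum_uniq_split.
have e10 : (e1 == e0) = false by apply: contraNF e0_notin => /eqP <-; rewrite mem_head.
rewrite orbit_form_tens (sum_head_lie_monomial _ enumE word1).
under eq_bracket_eval => w _ do rewrite !ffunE.
rewrite bracket_evalB (bracket_eval_head _ _ e0_notin) //=.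
rewrite !(bracket_eval_head _ _ e1_notin) //=.
by rewrite e10 !eqxx sub0r opprK.
Qed.

Lemma X0_notin_coinv_relations : X0 \notin Rel.
Proof.
apply/negP => /(orbit_form_coinv_relations e0 (ltnW le3p)).
by rewrite orbit_form_X0; apply/eqP/pchar_two_neq0.
Qed.

End Coinvariants.

Theorem lemma6p1 (k : closedFieldType) (p : nat)
  (charp : p \in [pchar k]%R) (p_ge3 : (3 <= p)%N) :
  coinv_dim k p = 1%N.
Proof.
have [e0 [e1 [rest enumE]]] := enum_ord_cons2 (ltnW p_ge3).
rewrite /coinv_dim (tensv_eq_coinv_relations_line charp p_ge3 enumE).
by rewrite dimv_add_line ?subSnn ?(X0_notin_coinv_relations charp p_ge3 enumE).
Qed.
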